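(* The residue hyperfield $Fv$ of a Krasner valued hyperfield $(F,v)$ is a field, i.e. its hyperaddition takes only singleton values.
   Context: A hyperfield is $(F,+,\cdot,0,1)$ with $+$ a multivalued operation making $(F,+,0)$ a canonical hypergroup (associative, commutative, unique inverses $-x$ with $0\in x+(-x)$, and $z\in x+y\Rightarrow y\in z+(-x)$; write $x-y:=x+(-y)$, $A+B:=\bigcup_{a\in A,b\in B}a+b$), $(F,\cdot)$ commutative with $0$ absorbing, $x(y+z)=xy+xz$, and $F\setminus\{0\}$ an abelian group with neutral $1\neq0$. Valuation on $F$: for an ordered abelian group $\Gamma$ and $\infty>\Gamma$ with $\gamma+\infty=\infty+\gamma=\infty$, a surjective map $v:F\to\Gamma\cup\{\infty\}$ with $vx=\infty\iff x=0$, $v(xy)=vx+vy$, $z\in x+y\Rightarrow vz\ge\min\{vx,vy\}$; $vF:=v(F\setminus\{0\})$; $\mathcal{O}_v:=\{x:vx\ge0\}$, $\mathcal{M}_v:=\{x:vx>0\}$. Residue hyperfield: $Fv:=\{x+\mathcal{M}_v: x\in\mathcal{O}_v\}$ where $x+\mathcal{M}_v:=\bigcup_{m\in\mathcal{M}_v}(x+m)$, with hyperaddition $(x+\mathcal{M}_v)\oplus(y+\mathcal{M}_v):=\{z+\mathcal{M}_v:z\in x+y\}$ and multiplication $(x+\mathcal{M}_v)(y+\mathcal{M}_v):=xy+\mathcal{M}_v$; it is a hyperfield. An initial segment of $\Gamma$ is $\rho\subseteq\Gamma$ with $\delta\in\rho,\gamma<\delta\Rightarrow\gamma\in\rho$;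 $\rho+\gamma:=\{\delta+\gamma:\delta\in\rho\}$; ''$\alpha>\rho+\gamma$'' means $\alpha\notin\rho+\gamma$. Krasner valued hyperfield: a valued hyperfield $(F,v)$ such that (KVH1) for all $x,y\in F$ with $0\notin x+y$, $v(x+y)$ is a singleton; (KVH2) there is an initial segment $\rho_v$ of $vF$ with $0\in\rho_v$ (the norm) such that for all $x,y,z,t\in F$ with $z\in x+y$: $t\in x+y$ iff $vs>\rho_v+\min\{vx,vy\}$ for all $s\in z-t$. *)

Set Implicit Arguments.
Unset Strict Implicit.

Record OAGroup := {
  og :> Type;
  gadd : og -> og -> og;
  gzero : og;
  gopp : og -> og;
  gle : og -> og -> Prop;
  gaddA : forall a b c, gadd a (gadd b c) = gadd (gadd a b) c;
  gaddC : forall a b, gadd a b = gadd b a;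
  gadd0 : forall a, gadd a gzero = a;
  gaddN : forall a, gadd a (gopp a) = gzero;
  gle_refl : forall a, gle a a;
  gle_anti : forall a b, gle a b -> gle b a -> a = b;
  gle_trans : forall a b c, gle a b -> gle b c -> gle a c;
  gle_total : forall a b, gle a b \/ gle b a;
  gle_add : forall a b c, gle a b -> gle (gadd a c) (gadd b c)
}.

Definition glt (G : OAGroup) (a b : G) : Prop := gle a b /\ a <> b.

(** Gamma u {oo}, with [None] = oo. *)
Definition eadd (G : OAGroup) (a b : option G) : option G :=
  match a, b with Some a, Some b => Some (gadd a b) | _, _ => None end.

Definition ele (G : OAGroup) (a b : option G) : Prop :=
  match a, b with
  | _, None => True
  | None, Some _ => False
  | Some a, Some b => gle a b
  end.

Definition is_emin (G : OAGroup) (a b m : option G) : Prop :=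
  (ele a b /\ m = a) \/ (ele b a /\ m = b).

(** * Hyperfields.  [hadd x y z] means z \in x + y. *)
Record Hyperfield := {
  hf :> Type;
  hadd : hf -> hf -> hf -> Prop;
  hzero : hf;
  hone : hf;
  hneg : hf -> hf;
  hmul : hf -> hf -> hf;
  hadd_nonempty : forall x y, exists z, hadd x y z;
  haddA : forall x y z w,
      (exists a, hadd x y a /\ hadd a z w) <-> (exists b, hadd y z b /\ hadd x b w);
  haddC : forall x y w, hadd x y w <-> hadd y x w;
  hadd0 : forall x w, hadd x hzero w <-> w = x;
  haddN : forall x, hadd x (hneg x) hzero;
  hneg_uniq : forall x y, hadd x y hzero -> y = hneg x;
  hadd_rev : forall x y z, hadd x y z -> hadd z (hneg x) y;
  hmulC : forall x y, hmul x y = hmul y x;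
  hmulA : forall x y z, hmul x (hmul y z) = hmul (hmul x y) z;
  hmul1 : forall x, hmul hone x = x;
  hmul0 : forall x, hmul hzero x = hzero;
  hmulDr : forall x y z w,
      (exists a, hadd y z a /\ w = hmul x a) <-> hadd (hmul x y) (hmul x z) w;
  hone_neq0 : hone <> hzero;
  hmul_neq0 : forall x y, x <> hzero -> y <> hzero -> hmul x y <> hzero;
  hinv_ex : forall x, x <> hzero -> exists y, hmul x y = hone
}.

Definition hsub (F : Hyperfield) (x y z : F) : Prop := hadd x (hneg y) z.

Definition is_valuation (F : Hyperfield) (G : OAGroup) (v : F -> option G) : Prop :=
  (forall g : option G, exists x, v x = g) /\
  (forall x, v x = None <-> x = (hzero F)) /\
  (forall x y, v (hmul x y) = eadd (v x) (v y)) /\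
  (forall x y z, hadd x y z -> forall m, is_emin (v x) (v y) m -> ele m (v z)).

Definition value_set (F : Hyperfield) (G : OAGroup) (v : F -> option G) (g : G) : Prop :=
  exists x, x <> (hzero F) /\ v x = Some g.

Definition is_initial_segment (G : OAGroup) (S rho : G -> Prop) : Prop :=
  (forall g, rho g -> S g) /\
  (forall d g, rho d -> S g -> glt g d -> rho g).

(** [above rho m a] : "a > rho + m", i.e. a \notin rho + m, for a, m in Gamma u {oo}.
    Convention for m = oo: a > rho + oo iff a = oo. *)
Definition above (G : OAGroup) (rho : G -> Prop) (m a : option G) : Prop :=
  match m with
  | None => a = None
  | Some m =>
      match a with
      | None => True
      | Some a => ~ (exists d, rho d /\ a = gadd d m)
      end
  end.

Definition KVH1 (F : Hyperfield) (G : OAGroup) (v : F -> option G) : Prop :=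
  forall x y : F, ~ hadd x y (hzero F) ->
    exists g, (forall a, hadd x y a -> v a = g) /\ (exists a, hadd x y a /\ v a = g).

Definition KVH2 (F : Hyperfield) (G : OAGroup) (v : F -> option G) (rho : G -> Prop) : Prop :=
  forall x y z t : F, hadd x y z ->
    (hadd x y t <->
       forall s, hsub z t s -> forall m, is_emin (v x) (v y) m -> above rho m (v s)).

Definition is_krasner_valued (F : Hyperfield) (G : OAGroup) (v : F -> option G) : Prop :=
  is_valuation v /\ KVH1 v /\
  exists rho : G -> Prop,
    is_initial_segment (value_set v) rho /\ rho (gzero G) /\ KVH2 v rho.

Definition valring (F : Hyperfield) (G : OAGroup) (v : F -> option G) (x : F) : Prop :=
  ele (Some (gzero G)) (v x).
Definition maxideal (F : Hyperfield) (G : OAGroup) (v : F -> option G) (x : F) : Prop :=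
  ele (Some (gzero G)) (v x) /\ v x <> Some (gzero G).

Definition coset (F : Hyperfield) (G : OAGroup) (v : F -> option G) (x : F) : F -> Prop :=
  fun w => exists m, maxideal v m /\ hadd x m w.

(** (x + M_v) (+) (y + M_v) = { z + M_v : z \in x + y }, a set of cosets *)
Definition residue_hadd (F : Hyperfield) (G : OAGroup) (v : F -> option G) (x y : F)
  : (F -> Prop) -> Prop :=
  fun D => exists z, hadd x y z /\ D = coset v z.

Definition is_singleton (T : Type) (S : T -> Prop) : Prop :=
  exists c, forall d, S d <-> d = c.

(* Two elements z, z' of x + y give the same coset: by (KVH2) every s in z - z'
   lies above rho + min(vx, vy), and since rho contains all values <= 0 this
   forces vs > min(vx, vy) >= 0, i.e. s is in M_v.  Then z in z' + s, and
   z + M_v is contained in z' + s + M_v, which is z' + M_v because M_v is closed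
   under hyperaddition by the ultrametric inequality. *)

From Stdlib Require Import Classical FunctionalExtensionality PropExtensionality.

Set Implicit Arguments.
Unset Strict Implicit.

Section OrderedGroup.
Variable G : OAGroup.

Lemma gadd0l (a : G) : gadd (gzero G) a = a.
Proof. rewrite gaddC; apply gadd0. Qed.

Lemma gsubK (a b : G) : gadd (gadd a (gopp b)) b = a.
Proof. rewrite <- gaddA, (gaddC (gopp b)), gaddN; apply gadd0. Qed.

Lemma gle_sub0 (a b : G) : gle a b -> gle (gadd a (gopp b)) (gzero G).
Proof. intro Hab; rewrite <- (gaddN b); apply gle_add, Hab. Qed.

Lemma ele_total (a b : option G) : ele a b \/ ele b a.
Proof. destruct a, b; simpl; auto; apply gle_total. Qed.

Lemma ele_trans (a b c : option G) : ele a b -> ele b c -> ele a c.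
Proof. destruct a, b, c; simpl; try tauto; apply gle_trans. Qed.

Lemma emin_exists (a b : option G) : exists m, is_emin a b m.
Proof.
  destruct (ele_total a b); [exists a; left | exists b; right]; auto.
Qed.

(* [maxideal v x] is convertible to [epos (v x)]. *)
Definition epos (a : option G) : Prop := ele (Some (gzero G)) a /\ a <> Some (gzero G).

Lemma epos_None : epos None.
Proof. split; [exact I | discriminate]. Qed.

Lemma epos_ele (a b : option G) : epos a -> ele a b -> epos b.
Proof.
  intros [Ha0 Ha] Hab; split; [exact (ele_trans Ha0 Hab)|].
  intros ->; apply Ha; destruct a as [a|]; [|contradiction].
  f_equal; apply gle_anti; assumption.
Qed.

Lemma epos_gt (m a : G) : gle (gzero G) m -> glt m a -> epos (Some a).
Proof.
  intros Hm [Hma Hne]; split; [exact (gle_trans Hm Hma)|].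
  intros [= ->]; apply Hne, gle_anti; assumption.
Qed.

End OrderedGroup.

Section HyperfieldFacts.
Variable F : Hyperfield.

Lemma hnegK (z : F) : hneg (hneg z) = z.
Proof. symmetry; apply hneg_uniq, haddC, haddN. Qed.

Lemma hsub_hadd (z z' s : F) : hsub z z' s -> hadd z' s z.
Proof. intro Hs; apply haddC, hadd_rev, haddC in Hs; rewrite hnegK in Hs; exact Hs. Qed.

End HyperfieldFacts.

Section Valuation.
Variables (F : Hyperfield) (G : OAGroup) (v : F -> option G).
Hypothesis Hv : is_valuation v.

Lemma valuation_eq0 x : v x = None <-> x = hzero F.
Proof. apply (proj1 (proj2 Hv)). Qed.

Lemma valuation_mul x y : v (hmul x y) = eadd (v x) (v y).
Proof. apply (proj1 (proj2 (proj2 Hv))). Qed.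

Lemma valuation_ultra x y z m : hadd x y z -> is_emin (v x) (v y) m -> ele m (v z).
Proof. intros Hz; apply (proj2 (proj2 (proj2 Hv)) x y z Hz). Qed.

Lemma valuation_one : v (hone F) = Some (gzero G).
Proof.
  assert (H := valuation_mul (hone F) (hone F)); rewrite hmul1 in H.
  destruct (v (hone F)) as [g|] eqn:E.
  - injection H as H; f_equal.
    rewrite <- (gaddN g); rewrite H at 2; rewrite <- gaddA, gaddN, gadd0; reflexivity.
  - apply valuation_eq0 in E; contradiction (hone_neq0 E).
Qed.

Lemma value_set_sub u s m a :
  v u = Some m -> v s = Some a -> value_set v (gadd a (gopp m)).
Proof.
  intros Hu Hs.
  assert (Hu0 : u <> hzero F) by (intros E; apply valuation_eq0 in E; congruence).
  destruct (hinv_ex Hu0) as [y Hy].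
  assert (H := valuation_mul u y); rewrite Hy, valuation_one, Hu in H.
  destruct (v y) as [b|] eqn:Ey; [injection H as H | discriminate].
  assert (Hb : b = gopp m).
  { rewrite <- (gadd0 b), <- (gaddN m), gaddA, (gaddC b m), <- H; apply gadd0l. }
  subst b; exists (hmul s y); split.
  - apply hmul_neq0; intros E; apply valuation_eq0 in E; congruence.
  - rewrite valuation_mul, Hs, Ey; reflexivity.
Qed.

Lemma maxideal_hadd s m b : maxideal v s -> maxideal v m -> hadd s m b -> maxideal v b.
Proof.
  intros Hs Hm Hb; destruct (emin_exists (v s) (v m)) as [c Hc].
  apply (@epos_ele G c); [|exact (valuation_ultra Hb Hc)].
  destruct Hc as [[_ ->]|[_ ->]]; assumption.
Qed.

Lemma coset_incl z z' s : hadd z' s z -> maxideal v s ->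
  forall w, coset v z w -> coset v z' w.
Proof.
  intros Hz Hs w [m [Hm Hw]].
  destruct (proj1 (haddA z' s m w) (ex_intro _ z (conj Hz Hw))) as [b [Hb Hw']].
  exists b; split; [exact (maxideal_hadd Hs Hm Hb) | exact Hw'].
Qed.

Section Krasner.
Variable rho : G -> Prop.
Hypotheses (Hseg : is_initial_segment (value_set v) rho) (Hrho0 : rho (gzero G)).

(* [a - m] is a value <= 0, hence in rho, and [a = (a - m) + m]. *)
Lemma above_lt u s m a :
  v u = Some m -> v s = Some a -> above rho (Some m) (Some a) -> glt m a.
Proof.
  intros Hu Hs Habove.
  assert (Hnle : ~ gle a m).
  { intros Ham; apply Habove; exists (gadd a (gopp m)); split; [|symmetry; apply gsubK].
    destruct (classic (gadd a (gopp m) = gzero G)) as [E|E]; [rewrite E; exact Hrho0|].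
    apply (proj2 Hseg (gzero G)); [exact Hrho0 | exact (value_set_sub Hu Hs)|].
    split; [exact (gle_sub0 Ham) | exact E]. }
  split; [destruct (gle_total m a); tauto|].
  intros ->; apply Hnle, gle_refl.
Qed.

Lemma above_min_maxideal x y m s : valring v x -> valring v y ->
  is_emin (v x) (v y) m -> above rho m (v s) -> maxideal v s.
Proof.
  intros Hx Hy Hm Habove; change (epos (v s)).
  destruct m as [m|]; [|simpl in Habove; rewrite Habove; apply epos_None].
  assert (Hu : exists u, v u = Some m /\ gle (gzero G) m).
  { destruct Hm as [[_ E]|[_ E]]; [exists x | exists y]; unfold valring in *;
      rewrite <- E in *; auto. }
  destruct Hu as [u [Hu Hm0]].
  destruct (v s) as [a|] eqn:Es; [|apply epos_None].
  exact (epos_gt Hm0 (above_lt Hu Es Habove)).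
Qed.

Hypothesis HK : KVH2 v rho.

Lemma krasner_hsub_maxideal x y z z' s : valring v x -> valring v y ->
  hadd x y z -> hadd x y z' -> hsub z z' s -> maxideal v s.
Proof.
  intros Hx Hy Hz Hz' Hs; destruct (emin_exists (v x) (v y)) as [m Hm].
  exact (above_min_maxideal Hx Hy Hm (proj1 (HK z' Hz) Hz' s Hs m Hm)).
Qed.

Lemma krasner_coset_eq x y z z' : valring v x -> valring v y ->
  hadd x y z -> hadd x y z' -> coset v z = coset v z'.
Proof.
  intros Hx Hy Hz Hz'.
  assert (Hincl : forall t t', hadd x y t -> hadd x y t' ->
            forall w, coset v t w -> coset v t' w).
  { intros t t' Ht Ht'; destruct (hadd_nonempty t (hneg t')) as [s Hs].
    exact (coset_incl (hsub_hadd Hs) (krasner_hsub_maxideal Hx Hy Ht Ht' Hs)). }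
  apply functional_extensionality; intros w.
  apply propositional_extensionality; split; apply Hincl; assumption.
Qed.

End Krasner.
End Valuation.

Theorem proposition4p16 (F : Hyperfield) (G : OAGroup) (v : F -> option G) :
  is_krasner_valued v ->
  forall x y : F, valring v x -> valring v y ->
    is_singleton (residue_hadd v x y).
Proof.
  intros [Hv [_ [rho [Hseg [Hrho0 HK]]]]] x y Hx Hy.
  destruct (hadd_nonempty x y) as [z0 Hz0].
  exists (coset v z0); intros D; split.
  - intros [z [Hz ->]]; exact (krasner_coset_eq Hv Hseg Hrho0 HK Hx Hy Hz Hz0).
  - intros ->; exists z0; auto.
Qed.
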